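(* Let $\mathcal{A}\in\mathcal{T}'_6$ with $c_{13}^4=c_{14}^5=c_{15}^6=c_{24}^5=c_{25}^6=c_{14}^6=c_{24}^6=c_{13}^6=0$ and $c_{13}^5c_{35}^6\ne0$. Then the automorphisms of $\mathcal{A}$ are exactly the linear maps $\varphi$ given by $\varphi(e_1)=xe_1+a_{61}e_6$, $\varphi(e_2)=e_2+a_{62}e_6$, $\varphi(e_3)=xe_3$, $\varphi(e_4)=xe_4$, $\varphi(e_5)=x^2e_5$, $\varphi(e_6)=x^3e_6$, with $x\in\mathbb{C}^*$ and $a_{61},a_{62}\in\mathbb{C}$.
   Context: Over $\mathbb{C}$, basis $e_1,\dots,e_n$, $e_ie_j=\sum_kc_{ij}^ke_k$. For $n\ge3$, $\mathcal{T}'_n$ is the family of anticommutative algebra structures with $c_{ij}^k=0$ whenever $k\le\max\{i,j\}$ and $e_ie_{i+1}=e_{i+2}$ for $1\le i\le n-2$, other structure constants arbitrary subject to these and anticommutativity. *)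

From mathcomp Require Import all_boot all_algebra.
From mathcomp Require Import complex.
From mathcomp Require Import reals Rstruct.
Set Implicit Arguments. Unset Strict Implicit. Unset Printing Implicit Defensive.
Import GRing.Theory Num.Theory.
Local Open Scope ring_scope.

Notation C := (Rdefinitions.R[i]).

(* Structure constants: e_i e_j = \sum_k c i j k e_k, basis indexed by 'I_n
   (e_1,...,e_n of the paper are indices 0,...,n-1). *)
Definition sconst (F : Type) (n : nat) := 'I_n -> 'I_n -> 'I_n -> F.

Definition algmul (F : nzRingType) n (c : sconst F n) (u v : 'rV[F]_n) : 'rV[F]_n :=
  \row_k \sum_(i < n) \sum_(j < n) u 0 i * v 0 j * c i j k.

Definition in_Tprime (F : nzRingType) n (c : sconst F n) : Prop :=
  [/\
      (forall i k, c i i k = 0),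
      (forall i j k, c i j k = - c j i k),
      (forall i j k : 'I_n, (k <= maxn i j)%N -> c i j k = 0) &
      (forall i j k : 'I_n, (j : nat) = i.+1 -> c i j k = ((k : nat) == i.+2)%:R)].

(* The linear map phi with phi(e_i) = \sum_j A i j e_j acts on coordinate rows
   by u |-> u *m A.  It is an automorphism iff it is bijective and multiplicative. *)
Definition is_automorphism (F : comUnitRingType) n (c : sconst F n) (A : 'M[F]_n) : Prop :=
  A \in unitmx /\
  forall u v : 'rV[F]_n, algmul c (u *m A) (v *m A) = algmul c u v *m A.

Definition phi_mat (F : nzRingType) (x a61 a62 : F) : 'M[F]_6 :=
  \matrix_(i < 6, j < 6)
    match (i : nat), (j : nat) with
    | 0, 0 => x
    | 0, 5 => a61
    | 1, 1 => 1
    | 1, 5 => a62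
    | 2, 2 => x
    | 3, 3 => x
    | 4, 4 => x ^+ 2
    | 5, 5 => x ^+ 3
    | _, _ => 0
    end.

Definition e_ (k : nat) : 'I_6 := inord k.-1.

(* Under these hypotheses the multiplication depends only on al = c_13^5 and
   be = c_35^6: besides e_i e_{i+1} = e_{i+2}, the only nonzero products of
   basis vectors are e_1 e_3 = al e_5 and e_3 e_5 = be e_6 ([std_constE]).
   A matrix A (rows = images of the basis vectors) is multiplicative iff its
   rows satisfy row_i row_j = sum_l c_ij^l row_l ([aut_basis_eq]); these
   equations are solved in stages:
   - row_{i+2} = row_i row_{i+1} makes rows 3..6 lower triangular;
   - the same relation gives the diagonal recursion, and invertibility makes
     the diagonal nonzero;
   - the products e_1e_3, e_2e_4, e_1e_4, e_1e_5, e_2e_5, e_1e_2 kill the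
     superdiagonal entries of the first rows;
   - e_1 e_3 = al e_5 and e_3 e_5 = be e_6 force the diagonal (x,1,x,x,x^2,x^3);
   - the remaining equations kill every other entry except A_16 and A_26.
   Conversely every phi_mat x a61 a62 with x <> 0 is triangular with nonzero
   diagonal and multiplicative by direct computation. *)

From mathcomp Require Import all_boot all_algebra.
From mathcomp Require Import complex.
From mathcomp Require Import reals Rstruct.
From mathcomp Require Import ring.
Import GRing.Theory Num.Theory.
Local Open Scope ring_scope.
Set Implicit Arguments. Unset Strict Implicit.

Lemma sum_delta (F : nzRingType) n (i : 'I_n) (f : 'I_n -> F) :
  \sum_j (delta_mx 0 i : 'rV[F]_n) 0 j * f j = f i.
Proof.
rewrite (bigD1 i) //= mxE !eqxx mul1r big1 ?addr0 // => j /negbTE nji.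
by rewrite mxE nji andbF mul0r.
Qed.

Lemma algmul_delta (F : nzRingType) n (c : sconst F n) i j :
  algmul c (delta_mx 0 i) (delta_mx 0 j) = \row_k c i j k.
Proof.
apply/rowP => k; rewrite !mxE -[RHS](sum_delta i (fun i' => c i' j k)).
apply: eq_bigr => i' _; rewrite -(sum_delta j (fun j' => c i' j' k)) mulr_sumr.
by apply: eq_bigr => j' _; rewrite mulrA.
Qed.

Lemma unitmx_row_neq0 (F : comUnitRingType) n (M : 'M[F]_n) i :
  M \in unitmx -> row i M != 0.
Proof.
move=> M_unit; apply/eqP => /(congr1 (mulmx^~ (invmx M))).
rewrite rowE mulmxK // mul0mx => /rowP/(_ i); rewrite !mxE !eqxx /=.
by move/eqP; rewrite oner_eq0.
Qed.

Lemma mul_eq0_cancel (F : idomainType) (x y : F) : y != 0 -> x * y = 0 -> x = 0.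
Proof. by move=> y_neq0 /eqP; rewrite mulf_eq0 (negbTE y_neq0) orbF => /eqP. Qed.

Lemma sum_ord6 (F : 'I_6 -> C) : \sum_(i < 6) F i =
  F (inord 0) + F (inord 1) + F (inord 2) + F (inord 3) + F (inord 4) + F (inord 5).
Proof.
rewrite !big_ord_recr big_ord0 /= add0r.
by congr (_ + _ + _ + _ + _ + _); congr F; apply/val_inj; rewrite /= inordK.
Qed.

Lemma mx6P (M N : 'M[C]_6) :
  (forall i j, (i < 6)%N -> (j < 6)%N -> M (inord i) (inord j) = N (inord i) (inord j)) ->
  M = N.
Proof.
by move=> eqMN; apply/matrixP => i j; rewrite -(inord_val i) -(inord_val j) eqMN.
Qed.

(* The maps of the theorem are invertible: the transpose of phi_mat is lower
   triangular with diagonal (x, 1, x, x, x^2, x^3). *)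
Lemma phi_mat_unit (x a61 a62 : C) : x != 0 -> phi_mat x a61 a62 \in unitmx.
Proof.
move=> x_neq0; rewrite unitmxE -det_tr det_trig.
  rewrite !big_ord_recr big_ord0 /= !mxE /= unitfE.
  by rewrite !mul1r !mulf_neq0 ?expf_neq0 ?oner_neq0.
apply/is_trig_mxP => -[i lt_i6] [j lt_j6] /= lt_ij; rewrite !mxE /=.
by case: i lt_i6 lt_ij => [|[|[|[|[|[|i]]]]]] //; case: j lt_j6 => [|[|[|[|[|[|j]]]]]].
Qed.

Lemma mul_phiE (x a61 a62 : C) (u : 'rV[C]_6) :
  (((u *m phi_mat x a61 a62) 0 (inord 0) = u 0 (inord 0) * x)%R *
   ((u *m phi_mat x a61 a62) 0 (inord 1) = u 0 (inord 1))%R *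
   ((u *m phi_mat x a61 a62) 0 (inord 2) = u 0 (inord 2) * x)%R *
   ((u *m phi_mat x a61 a62) 0 (inord 3) = u 0 (inord 3) * x)%R *
   ((u *m phi_mat x a61 a62) 0 (inord 4) = u 0 (inord 4) * x ^+ 2)%R *
   ((u *m phi_mat x a61 a62) 0 (inord 5) =
      u 0 (inord 0) * a61 + u 0 (inord 1) * a62 + u 0 (inord 5) * x ^+ 3)%R)%type.
Proof. by do !split; rewrite mxE sum_ord6 !mxE !inordK //=; ring. Qed.

Definition std_const (al be : C) (i j k : nat) : C :=
  match i, j, k with
  | 0, 1, 2 => 1 | 1, 0, 2 => -1 | 1, 2, 3 => 1 | 2, 1, 3 => -1
  | 2, 3, 4 => 1 | 3, 2, 4 => -1 | 3, 4, 5 => 1 | 4, 3, 5 => -1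
  | 0, 2, 4 => al | 2, 0, 4 => -al | 2, 4, 5 => be | 4, 2, 5 => -be
  | _, _, _ => 0
  end.

Lemma std_constE (c : sconst C 6) :
  in_Tprime c ->
  c (e_ 1) (e_ 3) (e_ 4) = 0 -> c (e_ 1) (e_ 4) (e_ 5) = 0 ->
  c (e_ 1) (e_ 5) (e_ 6) = 0 -> c (e_ 2) (e_ 4) (e_ 5) = 0 ->
  c (e_ 2) (e_ 5) (e_ 6) = 0 -> c (e_ 1) (e_ 4) (e_ 6) = 0 ->
  c (e_ 2) (e_ 4) (e_ 6) = 0 -> c (e_ 1) (e_ 3) (e_ 6) = 0 ->
  forall i j k, (i < 6)%N -> (j < 6)%N -> (k < 6)%N ->
  c (inord i) (inord j) (inord k) =
    std_const (c (e_ 1) (e_ 3) (e_ 5)) (c (e_ 3) (e_ 5) (e_ 6)) i j k.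
Proof.
case=> c_diag c_anti c_low c_succ h1 h2 h3 h4 h5 h6 h7 h8 i j k.
rewrite /e_ /= in h1 h2 h3 h4 h5 h6 h7 h8 *.
have low i' j' k' : (i' < 6)%N -> (j' < 6)%N -> (k' < 6)%N -> (k' <= maxn i' j')%N ->
    c (inord i') (inord j') (inord k') = 0.
  by move=> *; apply: c_low; rewrite !inordK.
have succ i' k' : (i'.+1 < 6)%N -> (k' < 6)%N ->
    c (inord i') (inord i'.+1) (inord k') = (k' == i'.+2)%:R.
  by move=> *; rewrite c_succ ?inordK // ltnW.
case: i => [|[|[|[|[|[|i]]]]]] //= _;
case: j => [|[|[|[|[|[|j]]]]]] //= _;
case: k => [|[|[|[|[|[|k]]]]]] //= _;
first [ done | by rewrite c_diag | by rewrite low | by rewrite succ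
      | by rewrite c_anti succ /= ?oppr0 | by rewrite c_anti | by rewrite ?h1 ?h2 ?h3 ?h4 ?h5 ?h6 ?h7 ?h8
      | by rewrite c_anti ?h1 ?h2 ?h3 ?h4 ?h5 ?h6 ?h7 ?h8 oppr0 ].
Qed.

Definition std_mul (al be : C) (u v : 'rV[C]_6) (k : nat) : C :=
  let u_ l := u 0 (inord l) in let v_ l := v 0 (inord l) in
  match k with
  | 2 => u_ 0 * v_ 1 - u_ 1 * v_ 0
  | 3 => u_ 1 * v_ 2 - u_ 2 * v_ 1
  | 4 => u_ 2 * v_ 3 - u_ 3 * v_ 2 + al * (u_ 0 * v_ 2 - u_ 2 * v_ 0)
  | 5 => u_ 3 * v_ 4 - u_ 4 * v_ 3 + be * (u_ 2 * v_ 4 - u_ 4 * v_ 2)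
  | _ => 0
  end.

Section StandardAlgebra.

Variables (al be : C) (c : sconst C 6).
Hypothesis c_std : forall i j k, (i < 6)%N -> (j < 6)%N -> (k < 6)%N ->
  c (inord i) (inord j) (inord k) = std_const al be i j k.

Lemma algmul_std u v k : (k < 6)%N -> algmul c u v 0 (inord k) = std_mul al be u v k.
Proof.
move=> lt_k6; rewrite mxE !sum_ord6.
by case: k lt_k6 => [|[|[|[|[|[|k]]]]]] // _; rewrite !c_std //=; ring.
Qed.

Lemma aut_basis_eq (A : 'M[C]_6) :
  (forall u v, algmul c (u *m A) (v *m A) = algmul c u v *m A) ->
  forall i j k, (i < 6)%N -> (j < 6)%N -> (k < 6)%N ->
  std_mul al be (row (inord i) A) (row (inord j) A) k =
    \sum_(l < 6) std_const al be i j l * A (inord l) (inord k).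
Proof.
move=> A_mul i j k lt_i6 lt_j6 lt_k6.
have := A_mul (delta_mx 0 (inord i)) (delta_mx 0 (inord j)).
rewrite -!rowE algmul_delta => /rowP/(_ (inord k)); rewrite algmul_std // => ->.
rewrite mxE; apply: eq_bigr => l _; rewrite mxE -[X in c _ _ X]inord_val c_std //.
by rewrite inord_val.
Qed.

Section Forward.

Variable A : 'M[C]_6.
Hypothesis A_aut : is_automorphism c A.
Hypotheses (al_neq0 : al != 0) (be_neq0 : be != 0).

Local Notation a i j := (A (inord i) (inord j)).

Local Notation basis_eqn i j k := (aut_basis_eq A_aut.2 (i:=i) (j:=j) (k:=k) isT isT isT).

Local Ltac basis_eq E h := have h := E; rewrite !big_ord_recr big_ord0 /= ?mxE in h.

Local Ltac use_known h :=
  repeat match goal with z : @eq C _ 0 |- _ =>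
    tryif constr_eq z h then fail else rewrite z in h end;
  rewrite ?(mul0r, mulr0, mul1r, add0r, addr0, subr0, sub0r, oppr0) in h.

(* row_{i+2} = row_i row_{i+1}, and a product only has coordinates above the
   larger index of its factors, so rows 3..6 of A are lower triangular. *)
Lemma aut_lowerE : ((a 2 0 = 0) * (a 2 1 = 0) * (a 3 0 = 0) * (a 3 1 = 0) *
  (a 3 2 = 0) * (a 4 0 = 0) * (a 4 1 = 0) * (a 4 2 = 0) * (a 4 3 = 0) *
  (a 5 0 = 0) * (a 5 1 = 0) * (a 5 2 = 0) * (a 5 3 = 0) * (a 5 4 = 0))%type.
Proof.
have z20 : a 2 0 = 0 by basis_eq (basis_eqn 0 1 0) h; use_known h.
have z21 : a 2 1 = 0 by basis_eq (basis_eqn 0 1 1) h; use_known h.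
have z30 : a 3 0 = 0 by basis_eq (basis_eqn 1 2 0) h; use_known h.
have z31 : a 3 1 = 0 by basis_eq (basis_eqn 1 2 1) h; use_known h.
have z32 : a 3 2 = 0 by basis_eq (basis_eqn 1 2 2) h; use_known h.
have z40 : a 4 0 = 0 by basis_eq (basis_eqn 2 3 0) h; use_known h.
have z41 : a 4 1 = 0 by basis_eq (basis_eqn 2 3 1) h; use_known h.
have z42 : a 4 2 = 0 by basis_eq (basis_eqn 2 3 2) h; use_known h.
have z43 : a 4 3 = 0 by basis_eq (basis_eqn 2 3 3) h; use_known h.
have z50 : a 5 0 = 0 by basis_eq (basis_eqn 3 4 0) h; use_known h.
have z51 : a 5 1 = 0 by basis_eq (basis_eqn 3 4 1) h; use_known h.
have z52 : a 5 2 = 0 by basis_eq (basis_eqn 3 4 2) h; use_known h.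
have z53 : a 5 3 = 0 by basis_eq (basis_eqn 3 4 3) h; use_known h.
have z54 : a 5 4 = 0 by basis_eq (basis_eqn 3 4 4) h; use_known h.
by do !split.
Qed.

(* The diagonal of rows 3..6 is determined by row_{i+2} = row_i row_{i+1}. *)
Lemma aut_diag_rec :
  [/\ a 2 2 = a 0 0 * a 1 1 - a 0 1 * a 1 0, a 3 3 = a 1 1 * a 2 2,
      a 4 4 = a 2 2 * a 3 3 & a 5 5 = a 3 3 * a 4 4].
Proof.
split.
- by basis_eq (basis_eqn 0 1 2) h; use_known h.
- by basis_eq (basis_eqn 1 2 3) h; rewrite ?aut_lowerE in h; use_known h.
- by basis_eq (basis_eqn 2 3 4) h; rewrite ?aut_lowerE in h; use_known h.
- by basis_eq (basis_eqn 3 4 5) h; rewrite ?aut_lowerE in h; use_known h.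
Qed.

(* Invertibility: row 6 of A is a multiple of e_6, hence a_66 <> 0, and the
   diagonal recursion propagates this to a_22, ..., a_55. *)
Lemma aut_diag_neq0 : [/\ a 1 1 != 0, a 2 2 != 0, a 3 3 != 0 & a 4 4 != 0].
Proof.
have a55_neq0 : a 5 5 != 0.
  apply: contraNneq (unitmx_row_neq0 (inord 5) A_aut.1) => a55_eq0.
  apply/eqP/rowP => j; rewrite !mxE -(inord_val j).
  by case: (nat_of_ord j) (ltn_ord j) => [|[|[|[|[|[|j']]]]]] //= _;
    rewrite ?aut_lowerE.
case: aut_diag_rec => _ a33E a44E a55E.
have [a33_neq0 a44_neq0] : a 3 3 != 0 /\ a 4 4 != 0.
  by apply/andP; rewrite -negb_or -mulf_eq0 -a55E.
have [a22_neq0 _] : a 2 2 != 0 /\ a 3 3 != 0.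
  by apply/andP; rewrite -negb_or -mulf_eq0 -a44E.
have [a11_neq0 _] : a 1 1 != 0 /\ a 2 2 != 0.
  by apply/andP; rewrite -negb_or -mulf_eq0 -a33E.
by split.
Qed.

(* The coordinates e_4, e_5, e_5, e_6, e_6, e_4 of the products e_1e_3, e_2e_4,
   e_1e_4, e_1e_5, e_2e_5, e_1e_2, divided by the nonzero diagonal entries,
   kill the entries above the diagonal in columns 2..4. *)
Lemma aut_topE : ((a 0 1 = 0) * (a 0 2 = 0) * (a 0 3 = 0) * (a 1 2 = 0) *
  (a 1 3 = 0) * (a 2 3 = 0))%type.
Proof.
case: aut_diag_neq0 => _ a22_neq0 a33_neq0 a44_neq0.
have z01 : a 0 1 = 0.
  basis_eq (basis_eqn 0 2 3) h; rewrite ?aut_lowerE in h; use_known h.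
  exact: mul_eq0_cancel a22_neq0 h.
have z12 : a 1 2 = 0.
  basis_eq (basis_eqn 1 3 4) h; rewrite ?aut_lowerE in h; use_known h.
  exact: mul_eq0_cancel a33_neq0 h.
have z02 : a 0 2 = 0.
  basis_eq (basis_eqn 0 3 4) h; rewrite ?aut_lowerE in h; use_known h.
  exact: mul_eq0_cancel a33_neq0 h.
have z03 : a 0 3 = 0.
  basis_eq (basis_eqn 0 4 5) h; rewrite ?aut_lowerE in h; use_known h.
  exact: mul_eq0_cancel a44_neq0 h.
have z13 : a 1 3 = 0.
  basis_eq (basis_eqn 1 4 5) h; rewrite ?aut_lowerE in h; use_known h.
  exact: mul_eq0_cancel a44_neq0 h.
have z23 : a 2 3 = 0 by basis_eq (basis_eqn 0 1 3) h; use_known h.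
by do !split.
Qed.

(* The relations e_1 e_3 = al e_5 and e_3 e_5 = be e_6 fix the diagonal. *)
Lemma aut_diagE : ((a 1 1 = 1) * (a 2 2 = a 0 0) * (a 3 3 = a 0 0) *
  (a 4 4 = a 0 0 ^+ 2) * (a 5 5 = a 0 0 ^+ 3))%type.
Proof.
case: aut_diag_neq0 => _ a22_neq0 _ a44_neq0.
case: aut_diag_rec; rewrite ?aut_topE mul0r subr0 => a22E a33E a44E a55E.
have a44_al : a 4 4 = a 0 0 * a 2 2.
  basis_eq (basis_eqn 0 2 4) h; rewrite ?aut_lowerE ?aut_topE in h; use_known h.
  by apply/esym/(mulfI al_neq0).
have a55_be : a 5 5 = a 2 2 * a 4 4.
  basis_eq (basis_eqn 2 4 5) h; rewrite ?aut_lowerE ?aut_topE in h; use_known h.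
  by apply/esym/(mulfI be_neq0).
have a33_a22 : a 3 3 = a 2 2 by apply: (mulIf a44_neq0); rewrite -a55E -a55_be.
have a11E : a 1 1 = 1 by apply: (mulIf a22_neq0); rewrite mul1r -a33E.
have a22_a00 : a 2 2 = a 0 0 by rewrite a22E a11E mulr1.
by do !split; rewrite ?a55_be ?a44_al ?a33_a22 ?a22_a00.
Qed.

Lemma aut_a00_neq0 : a 0 0 != 0.
Proof. by case: aut_diag_neq0 => _; rewrite aut_diagE. Qed.

Lemma aut_restE : ((a 1 0 = 0) * (a 0 4 = 0) * (a 1 4 = 0) * (a 2 4 = 0) *
  (a 2 5 = 0) * (a 3 4 = 0) * (a 3 5 = 0) * (a 4 5 = 0))%type.
Proof.
have a00_neq0 := aut_a00_neq0.
have z24 : a 2 4 = 0.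
  by basis_eq (basis_eqn 0 1 4) h; rewrite ?aut_lowerE ?aut_topE in h; use_known h.
have z25 : a 2 5 = 0.
  by basis_eq (basis_eqn 0 1 5) h; rewrite ?aut_lowerE ?aut_topE in h; use_known h.
have z14 : a 1 4 = 0.
  basis_eq (basis_eqn 1 3 5) h; rewrite ?aut_lowerE ?aut_topE ?aut_diagE in h.
  by use_known h; move/eqP: h; rewrite oppr_eq0 => /eqP/(mul_eq0_cancel a00_neq0).
have z04 : a 0 4 = 0.
  basis_eq (basis_eqn 0 3 5) h; rewrite ?aut_lowerE ?aut_topE ?aut_diagE in h.
  by use_known h; move/eqP: h; rewrite oppr_eq0 => /eqP/(mul_eq0_cancel a00_neq0).
have z45 : a 4 5 = 0.
  basis_eq (basis_eqn 0 2 5) h; rewrite ?aut_lowerE ?aut_topE ?aut_diagE in h.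
  by use_known h; apply: (mul_eq0_cancel al_neq0); rewrite mulrC -h.
have z34 : a 3 4 = 0.
  basis_eq (basis_eqn 2 3 5) h; rewrite ?aut_lowerE ?aut_topE ?aut_diagE in h.
  use_known h; move/eqP: h.
  by rewrite !mulf_eq0 (negbTE be_neq0) (negbTE a00_neq0) => /eqP.
have z10 : a 1 0 = 0.
  basis_eq (basis_eqn 1 2 4) h; rewrite ?aut_lowerE ?aut_topE ?aut_diagE in h.
  use_known h; move/eqP: h.
  by rewrite !mulf_eq0 (negbTE al_neq0) (negbTE a00_neq0) orbF => /eqP.
have z35 : a 3 5 = 0.
  by basis_eq (basis_eqn 1 2 5) h; rewrite ?aut_lowerE ?aut_topE in h; use_known h.
by do !split.
Qed.

Lemma aut_is_phi : A = phi_mat (a 0 0) (a 0 5) (a 1 5).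
Proof.
apply: mx6P => i j lt_i6 lt_j6; rewrite mxE !inordK //.
by case: i lt_i6 => [|[|[|[|[|[|i]]]]]] // _; case: j lt_j6 => [|[|[|[|[|[|j]]]]]] // _;
  rewrite /= ?aut_lowerE ?aut_topE ?aut_diagE ?aut_restE.
Qed.

End Forward.

Lemma phi_mat_aut x a61 a62 : x != 0 -> is_automorphism c (phi_mat x a61 a62).
Proof.
move=> x_neq0; split; first exact: phi_mat_unit.
move=> u v; apply/rowP => k; rewrite -(inord_val k).
move: (nat_of_ord k) (ltn_ord k) => {}k lt_k6.
rewrite algmul_std // mxE sum_ord6 !algmul_std // !mxE !inordK //.
by case: k lt_k6 => [|[|[|[|[|[|k]]]]]] // _; rewrite /= ?mul_phiE; ring.
Qed.

End StandardAlgebra.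

Theorem mainTheorem16 (c : sconst C 6) :
  in_Tprime c ->
  c (e_ 1) (e_ 3) (e_ 4) = 0 -> c (e_ 1) (e_ 4) (e_ 5) = 0 ->
  c (e_ 1) (e_ 5) (e_ 6) = 0 -> c (e_ 2) (e_ 4) (e_ 5) = 0 ->
  c (e_ 2) (e_ 5) (e_ 6) = 0 -> c (e_ 1) (e_ 4) (e_ 6) = 0 ->
  c (e_ 2) (e_ 4) (e_ 6) = 0 -> c (e_ 1) (e_ 3) (e_ 6) = 0 ->
  c (e_ 1) (e_ 3) (e_ 5) * c (e_ 3) (e_ 5) (e_ 6) != 0 ->
  forall A : 'M[C]_6,
    is_automorphism c A <->
    exists x : C, exists a61 : C, exists a62 : C,
      x != 0 /\ A = phi_mat x a61 a62.
Proof.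
move=> cT h1 h2 h3 h4 h5 h6 h7 h8 al_be_neq0 A.
have c_std := std_constE cT h1 h2 h3 h4 h5 h6 h7 h8.
have [al_neq0 be_neq0] : c (e_ 1) (e_ 3) (e_ 5) != 0 /\ c (e_ 3) (e_ 5) (e_ 6) != 0.
  by apply/andP; rewrite -negb_or -mulf_eq0.
split => [A_aut | [x [a61 [a62 [x_neq0 ->]]]]].
- exists (A (inord 0) (inord 0)), (A (inord 0) (inord 5)), (A (inord 1) (inord 5)).
  split; first exact (aut_a00_neq0 c_std A_aut al_neq0 be_neq0).
  exact (aut_is_phi c_std A_aut al_neq0 be_neq0).
- exact (phi_mat_aut c_std a61 a62 x_neq0).
Qed.
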